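(* In the setting described in the context, for every $\theta\in\Theta$ and every POVM $M$, $F^M_\theta\le C_\Upsilon(\theta)$. Moreover, there exists a POVM $M$ (possibly depending on $\theta$) with $F^M_\theta=C_\Upsilon(\theta)$ if and only if $\langle w_j'(\theta)|w_k(\theta)\rangle=0$ for all $j,k$ with $p_j(\theta)>0$ and $p_k(\theta)>0$.
   Context: Let $\Theta\subseteq\mathbb{R}$ be an open interval and $D\ge1$. For $\theta\in\Theta$ let $\Phi_\theta$ be a quantum channel on $D\times D$ complex matrices and $\rho_0=|\psi_0\rangle\langle\psi_0|$ a fixed pure input state. Canonical Kraus operators are $D\times D$ matrices $\Upsilon_1(\theta),\dots,\Upsilon_D(\theta)$, differentiable in $\theta$, with $\sum_k\Upsilon_k^\dagger\Upsilon_k=\mathbb{I}$, $\Phi_\theta(\rho)=\sum_k\Upsilon_k\rho\Upsilon_k^\dagger$, and $\mathrm{tr}\{\Upsilon_k\rho_0\Upsilon_j^\dagger\}=\delta_{jk}p_k(\theta)$. Write $\Upsilon_k(\theta)|\psi_0\rangle=\sqrt{p_k(\theta)}|w_k(\theta)\rangle$ with $\{|w_k(\theta)\rangle\}$ an orthonormal basis of $\mathbb{C}^D$ differentiable in $\theta$; the output is $\rho_\theta=\sum_kp_k|w_k\rangle\langle w_k|$. Each $p_k$ is assumed either identically zero or strictly positive on $\Theta$. Primes denote $d/d\theta$. $C_\Upsilon(\theta)=4\sum_k\mathrm{tr}\{\Upsilon_k'\rho_0\Upsilon_k'^\dagger\}$. A POVM is a finite family $M=\{M_m\}$ of positive semidefinite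 $D\times D$ matrices with $\sum_mM_m=\mathbb{I}$; with $p(m;\theta)=\mathrm{tr}\{\rho_\theta M_m\}$, its Fisher information is $F^M_\theta=\sum_{m:\,p(m;\theta)>0}\frac{1}{p(m;\theta)}\bigl(\frac{dp(m;\theta)}{d\theta}\bigr)^2$. *)

From HB Require Import structures.
From mathcomp Require Import all_boot all_order all_algebra.
From mathcomp Require Import all_classical all_reals all_analysis.
From mathcomp Require Import complex.
Set Implicit Arguments. Unset Strict Implicit. Unset Printing Implicit Defensive.
Import Order.TTheory GRing.Theory Num.Theory.
Local Open Scope ring_scope.
Local Open Scope complex_scope.

Section Defs.
Variable R : realType.
Local Notation C := R[i].

Definition adj m n (A : 'M[C]_(m, n)) : 'M[C]_(n, m) := (map_mx (@conjc R) A)^T.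

Definition cderiv (f : R -> C) (x : R) (d : C) : Prop :=
  is_derive x 1 (fun t => complex.Re (f t)) (complex.Re d) /\ is_derive x 1 (fun t => complex.Im (f t)) (complex.Im d).

Definition mxderiv m n (f : R -> 'M[C]_(m, n)) (x : R) (F : 'M[C]_(m, n)) : Prop :=
  forall i j, cderiv (fun t => f t i j) x (F i j).

(* positive semidefinite complex matrix: v^dagger A v >= 0 for all v
   (in R[i], 0 <= z means z is real and nonnegative) *)
Definition psd n (A : 'M[C]_n) : Prop :=
  forall v : 'cV[C]_n, 0 <= (adj v *m A *m v) 0 0.

Definition POVM n N (M : 'I_N -> 'M[C]_n) : Prop :=
  (forall m, psd (M m)) /\ \sum_(m < N) M m = 1%:M.

(* outcome probability p(m; theta) = tr(rho_theta M_m) (real part; it is real) *)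
Definition outprob n N (rho : R -> 'M[C]_n) (M : 'I_N -> 'M[C]_n) (m : 'I_N) (th : R) : R :=
  complex.Re (\tr (rho th *m M m)).

Definition fisher n N (rho : R -> 'M[C]_n) (M : 'I_N -> 'M[C]_n) (th : R) : R :=
  \sum_(m < N | 0 < outprob rho M m th)
     (derive1 (outprob rho M m) th) ^+ 2 / outprob rho M m th.

Definition outstate n (Ups : 'I_n -> R -> 'M[C]_n) (rho0 : 'M[C]_n) (th : R) : 'M[C]_n :=
  \sum_(k < n) (Ups k th *m rho0 *m adj (Ups k th)).

Definition CUps n (Ups' : 'I_n -> R -> 'M[C]_n) (rho0 : 'M[C]_n) (th : R) : R :=
  4 * complex.Re (\sum_(k < n) \tr (Ups' k th *m rho0 *m adj (Ups' k th))).

End Defs.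

From HB Require Import structures.
From mathcomp Require Import all_boot all_order all_algebra.
From mathcomp Require Import all_classical all_reals all_analysis.
From mathcomp Require Import complex ring lra.
Import Order.TTheory GRing.Theory Num.Theory.
Import numFieldNormedType.Exports.
Local Open Scope ring_scope.
Local Open Scope complex_scope.
Local Open Scope classical_set_scope.

Set Implicit Arguments. Unset Strict Implicit. Unset Printing Implicit Defensive.

(** Write a_k = Υ_k ψ0 and b_k = Υ_k' ψ0. For a POVM element M_m, the outcome
   probability is p_m = Σ_k <a_k, M_m a_k>, its derivative is
   Σ_k 2 Re <a_k, M_m b_k>, and Cauchy–Schwarz for the positive form of M_m gives
   (p_m')^2 <= 4 p_m Q_m with Q_m = Σ_k <b_k, M_m b_k>. Summing over m, and using
   Σ_m M_m = 1, gives F <= 4 Σ_k |b_k|^2 = C_Υ.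
   Equality forces b_k to act as λ_m a_k under every M_m, hence
   <a_j, b_k> = <b_j, a_k>; expanding b_k = c_k w_k + √p_k w_k' and using that
   <w_j', w_k> + <w_j, w_k'> = 0 (differentiate orthonormality) this is exactly
   <w_j', w_k> = 0. Conversely, under that condition the map a_k ↦ b_k extends
   to a Hermitian L, and measuring in an eigenbasis of L attains equality. *)

Section Adjoint.
Variable R : realType.
Local Notation C := R[i].

Lemma adjD m n (A B : 'M[C]_(m, n)) : adj (A + B) = adj A + adj B.
Proof. by apply/matrixP => i j; rewrite !mxE rmorphD. Qed.

Lemma adjN m n (A : 'M[C]_(m, n)) : adj (- A) = - adj A.
Proof. by apply/matrixP => i j; rewrite !mxE rmorphN. Qed.

Lemma adj0 m n : adj (0 : 'M[C]_(m, n)) = 0.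
Proof. by apply/matrixP => i j; rewrite !mxE rmorph0. Qed.

Lemma adjZ m n (c : C) (A : 'M[C]_(m, n)) : adj (c *: A) = conjc c *: adj A.
Proof. by apply/matrixP => i j; rewrite !mxE rmorphM. Qed.

Lemma adjK m n (A : 'M[C]_(m, n)) : adj (adj A) = A.
Proof. by apply/matrixP => i j; rewrite !mxE conjcK. Qed.

Lemma adjM m n p (A : 'M[C]_(m, n)) (B : 'M[C]_(n, p)) :
  adj (A *m B) = adj B *m adj A.
Proof.
apply/matrixP => i j; rewrite !mxE rmorph_sum; apply: eq_bigr => k _.
by rewrite !mxE rmorphM mulrC.
Qed.

Lemma adj_sum m n (I : finType) (P : pred I) (F : I -> 'M[C]_(m, n)) :
  adj (\sum_(i | P i) F i) = \sum_(i | P i) adj (F i).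
Proof. exact: (big_morph _ (@adjD m n) (@adj0 m n)). Qed.

Lemma conj_conjc (x : C) : (x^*)%R = conjc x.
Proof.
case: x => a b; have -> : a +i* b = a%:C + 'i%R * b%:C by rewrite -complexiE; simpc.
by rewrite conjC_rect ?complex_real // -complexiE; simpc.
Qed.

Lemma adj_conjT m n (A : 'M[C]_(m, n)) : adj A = map_mx Num.conj (A^T).
Proof. by apply/matrixP => i j; rewrite !mxE conj_conjc. Qed.

End Adjoint.

Section ComplexParts.
Variable R : realType.
Local Notation C := R[i].

Lemma ReD (a b : C) : complex.Re (a + b) = complex.Re a + complex.Re b.
Proof. exact: (raddfD (@complex.Re R : Rcomplex R -> R)). Qed.

Lemma ImD (a b : C) : complex.Im (a + b) = complex.Im a + complex.Im b.
Proof. exact: (raddfD (@complex.Im R : Rcomplex R -> R)). Qed.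

Lemma Re_sum (I : finType) (F : I -> C) :
  complex.Re (\sum_i F i) = \sum_i complex.Re (F i).
Proof. exact: (raddf_sum (@complex.Re R : Rcomplex R -> R)). Qed.

Lemma Im_sum (I : finType) (F : I -> C) :
  complex.Im (\sum_i F i) = \sum_i complex.Im (F i).
Proof. exact: (raddf_sum (@complex.Im R : Rcomplex R -> R)). Qed.

Lemma ReM (a b : C) :
  complex.Re (a * b) = complex.Re a * complex.Re b - complex.Im a * complex.Im b.
Proof. by case: a; case: b. Qed.

Lemma ImM (a b : C) :
  complex.Im (a * b) = complex.Re a * complex.Im b + complex.Im a * complex.Re b.
Proof. by case: a => a1 a2; case: b => b1 b2 /=; rewrite addrC. Qed.

Lemma conjcM (x y : C) : conjc (x * y) = conjc x * conjc y.
Proof. exact: rmorphM. Qed.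

Lemma real_complexM (x y : R) : (x * y)%:C = x%:C * y%:C :> C.
Proof. exact: rmorphM. Qed.

Lemma complex_ext (a b : C) :
  complex.Re a = complex.Re b -> complex.Im a = complex.Im b -> a = b.
Proof. by case: a; case: b => ? ? ? ? /= -> ->. Qed.

End ComplexParts.

Section Form.
Variable R : realType.
Local Notation C := R[i].

(* [form M x y] is <x, M y>, antilinear in [x]. *)
Definition form n (M : 'M[C]_n) (x y : 'cV[C]_n) : C := (adj x *m M *m y) 0 0.

Definition formsum n (I : finType) (M : 'M[C]_n) (a b : I -> 'cV[C]_n) : C :=
  \sum_k form M (a k) (b k).

Variable n : nat.
Implicit Types (M : 'M[C]_n) (x y : 'cV[C]_n).

Lemma formDl M x1 x2 y : form M (x1 + x2) y = form M x1 y + form M x2 y.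
Proof. by rewrite /form adjD !mulmxDl mxE. Qed.
Lemma formDr M x y1 y2 : form M x (y1 + y2) = form M x y1 + form M x y2.
Proof. by rewrite /form mulmxDr mxE. Qed.
Lemma formZl M c x y : form M (c *: x) y = conjc c * form M x y.
Proof. by rewrite /form adjZ -!scalemxAl mxE. Qed.
Lemma formZr M c x y : form M x (c *: y) = c * form M x y.
Proof. by rewrite /form -!scalemxAr mxE. Qed.
Lemma formBl M x1 x2 y : form M (x1 - x2) y = form M x1 y - form M x2 y.
Proof. by rewrite /form adjD adjN !mulmxDl !mulNmx !mxE. Qed.
Lemma formBr M x y1 y2 : form M x (y1 - y2) = form M x y1 - form M x y2.
Proof. by rewrite /form mulmxDr mulmxN !mxE. Qed.

Lemma form_sumM (I : finType) (F : I -> 'M[C]_n) x y :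
  form (\sum_i F i) x y = \sum_i form (F i) x y.
Proof. by rewrite /form mulmx_sumr mulmx_suml summxE. Qed.

Lemma form1 x y : form 1%:M x y = (adj x *m y) 0 0.
Proof. by rewrite /form mulmx1. Qed.

Lemma mxtrace_outer x y M : \tr (x *m adj y *m M) = form M y x.
Proof. by rewrite -mulmxA mxtrace_mulC trace_mx11. Qed.

Lemma outer_mulmx x y v : x *m adj y *m v = form 1%:M y v *: x.
Proof. by rewrite -mulmxA [adj y *m v]mx11_scalar mul_mx_scalar form1. Qed.

Lemma form_rank1 (N : 'rV[C]_n) x y :
  form (adj N *m N) x y = conjc ((N *m x) 0 0) * (N *m y) 0 0.
Proof.
by rewrite /form !mulmxA -[adj x *m adj N]adjM -mulmxA mxE big_ord1 !mxE.
Qed.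

End Form.

Section PositiveForm.
Variable R : realType.
Local Notation C := R[i].
Variables (n : nat) (M : 'M[C]_n).
Hypothesis M_psd : psd M.

Lemma psd_form x : complex.Im (form M x x) = 0 /\ 0 <= complex.Re (form M x x).
Proof. by move: (M_psd x); rewrite lecE => /andP[/eqP -> ->]. Qed.

Lemma psd_form_conj x y : form M x y = conjc (form M y x).
Proof.
have [h1 _] := psd_form (x + y); have [h2 _] := psd_form (x + 'i *: y).
have [hx _] := psd_form x; have [hy _] := psd_form y.
move: h1 h2; rewrite !(formDl, formDr, formZl, formZr) mulrA.
move: hx hy; case: (form M x x) => ? ?; case: (form M y y) => ? ?.
case: (form M x y) => ? ?; case: (form M y x) => ? ? /= -> -> h1 h2.
by apply: complex_ext => /=; lra.
Qed.

Lemma quadratic_ge0_disc (P S Q : R) : 0 <= Q ->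
  (forall t, 0 <= P + t * S + t ^+ 2 * Q) -> S ^+ 2 <= 4 * P * Q.
Proof.
move=> Q0 H; have [Qp|Qz] := ltrP 0 Q.
  have := H (- S / (2 * Q)).
  suff -> : P + - S / (2 * Q) * S + (- S / (2 * Q)) ^+ 2 * Q
            = (4 * P * Q - S ^+ 2) / (4 * Q).
    by rewrite pmulr_lge0 ?invr_gt0 ?mulr_gt0 // subr_ge0.
  by field; rewrite gt_eqF.
have Qe : Q = 0 by apply/le_anti; rewrite Q0 Qz.
subst Q; rewrite mulr0; have [->|Sn] := eqVneq S 0; first by rewrite expr0n.
have := H (- (`|P| + 1) / S).
have -> : P + - (`|P| + 1) / S * S + (- (`|P| + 1) / S) ^+ 2 * 0 = P - `|P| - 1.
  by field.
by have := ler_norm P; lra.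
Qed.

Variables (I : finType) (a b : I -> 'cV[C]_n).
Local Notation P := (complex.Re (formsum M a a)).
Local Notation S := (complex.Re (formsum M a b + formsum M b a)).
Local Notation Q := (complex.Re (formsum M b b)).

Lemma formsum_ge0 (c : I -> 'cV[C]_n) : 0 <= complex.Re (formsum M c c).
Proof. by rewrite Re_sum; apply: sumr_ge0 => k _; case: (psd_form (c k)). Qed.

(* Cauchy–Schwarz: the quadratic t |-> Σ_k <a_k + t b_k, M (a_k + t b_k)> is >= 0. *)
Lemma formsum_cauchy_schwarz : S ^+ 2 <= 4 * P * Q.
Proof.
apply: quadratic_ge0_disc; first exact: formsum_ge0.
move=> t; have := formsum_ge0 (fun k => a k + t%:C *: b k).
suff -> : complex.Re (formsum M (fun k => a k + t%:C *: b k) (fun k => a k + t%:C *: b k))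
          = P + t * S + t ^+ 2 * Q by [].
rewrite /formsum ReD !Re_sum mulrDr !mulr_sumr -!big_split /=; apply: eq_bigr => k _.
rewrite !(formDl, formDr, formZl, formZr) conjc_real.
case: (form M (a k) (a k)) => ? ?; case: (form M (a k) (b k)) => ? ?.
case: (form M (b k) (a k)) => ? ?; case: (form M (b k) (b k)) => ? ? /=.
ring.
Qed.

End PositiveForm.

(* Cauchy–Schwarz with P = 0, tested against y and 'i y, kills Re and Im of <y, M z>. *)
Lemma psd_form_eq0 (R : realType) n (M : 'M[R[i]]_n) z : psd M ->
  complex.Re (form M z z) = 0 -> forall y, form M y z = 0.
Proof.
move=> Mp hz y.
have h1 := formsum_cauchy_schwarz Mp (fun _ : 'I_1 => z) (fun _ => y).
have h2 := formsum_cauchy_schwarz Mp (fun _ : 'I_1 => z) (fun _ => 'i *: y).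
move: h1 h2; rewrite /formsum !big_ord1 hz !mulr0 !mul0r !(formZl, formZr).
rewrite (psd_form_conj Mp z y); case: (form M y z) => u1 u2 /= h1 h2.
have e1 : u1 + u1 = 0 by apply/eqP; rewrite -sqrf_eq0 eq_le sqr_ge0 andbT.
have e2 : - u2 - u2 = 0.
  apply/eqP; rewrite -sqrf_eq0 eq_le sqr_ge0 andbT.
  by apply: le_trans h2; rewrite le_eqVlt; apply/orP; left; apply/eqP; ring.
by apply: complex_ext => /=; lra.
Qed.

Section CauchySchwarzEquality.
Variable R : realType.
Local Notation C := R[i].

(* Equality in [formsum_cauchy_schwarz]; the second clause excludes Q > 0 = P. *)
Definition cs_equality n (I : finType) (M : 'M[C]_n) (a b : I -> 'cV[C]_n) :=
  (complex.Re (formsum M a b + formsum M b a)) ^+ 2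
    = 4 * complex.Re (formsum M a a) * complex.Re (formsum M b b)
  /\ (complex.Re (formsum M a a) = 0 -> complex.Re (formsum M b b) = 0).

Lemma cs_equality_proportional n (I : finType) (M : 'M[C]_n) (a b : I -> 'cV[C]_n) :
  psd M -> cs_equality M a b ->
  exists lam : R, forall y k, form M y (b k) = lam%:C * form M y (a k).
Proof.
set P := complex.Re (formsum M a a); set S := complex.Re (formsum M a b + formsum M b a).
set Q := complex.Re (formsum M b b) => Mp [hSQ hPQ].
have ge0 (z : 'cV[C]_n) : 0 <= complex.Re (form M z z) by case: (psd_form Mp z).
have vanish (z : I -> 'cV[C]_n) : complex.Re (formsum M z z) = 0 ->
    forall y k, form M y (z k) = 0.
  move=> h y k; apply: (psd_form_eq0 Mp) => //.
  by move: h; rewrite Re_sum => /psumr_eq0P; apply => // l _; apply: ge0.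
have [Pp|Pz] := ltrP 0 P; last first.
  have Pe : P = 0 by apply/le_anti; rewrite Pz formsum_ge0.
  by exists 0 => y k; rewrite mul0r (vanish _ (hPQ Pe)).
(* b_k - λ a_k with λ = S / 2P makes the Cauchy–Schwarz quadratic vanish. *)
pose lam := S / (2 * P); exists lam => y k.
have hz : complex.Re (formsum M (fun l => b l - lam%:C *: a l) (fun l => b l - lam%:C *: a l))
          = Q - lam * S + lam ^+ 2 * P.
  rewrite /Q /S /P /formsum ReD !Re_sum mulrDr !mulr_sumr opprD -!sumrN -!big_split /=.
  apply: eq_bigr => l _; rewrite !(formBl, formBr, formZl, formZr) conjc_real.
  case: (form M (a l) (a l)) => ? ?; case: (form M (a l) (b l)) => ? ?.
  case: (form M (b l) (a l)) => ? ?; case: (form M (b l) (b l)) => ? ? /=.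
  ring.
have hz0 : Q - lam * S + lam ^+ 2 * P = 0.
  apply: (@mulIf _ (4 * P)); first by rewrite mulf_neq0 // gt_eqF.
  rewrite mul0r; have hP : P != 0 by rewrite gt_eqF.
  have -> : (Q - lam * S + lam ^+ 2 * P) * (4 * P) = 4 * P * Q - S ^+ 2 by rewrite /lam; field.
  by rewrite hSQ subrr.
by have /eqP := vanish _ (etrans hz hz0) y k; rewrite formBr formZr subr_eq0 => /eqP.
Qed.

Lemma povm_cs_equality_sym n N D (M : 'I_N -> 'M[C]_n) (a b : 'I_D -> 'cV[C]_n) :
  POVM M -> (forall m, cs_equality (M m) a b) ->
  forall j k, form 1%:M (a j) (b k) = form 1%:M (b j) (a k).
Proof.
move=> [Mpsd Msum] hcs.
have [lam hlam] := boolp.choice (fun m => cs_equality_proportional (Mpsd m) (hcs m)).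
move=> j k; rewrite -Msum !form_sumM; apply: eq_bigr => m _.
rewrite hlam (psd_form_conj (Mpsd m) (b j)) hlam conjcM conjc_real.
by rewrite -(psd_form_conj (Mpsd m)).
Qed.

End CauchySchwarzEquality.

Lemma sum_sq_div_le (R : realType) N (p s Q : 'I_N -> R) :
  (forall m, 0 <= p m) -> (forall m, 0 <= Q m) ->
  (forall m, s m ^+ 2 <= 4 * p m * Q m) ->
  (\sum_(m < N | 0 < p m) s m ^+ 2 / p m <= \sum_m 4 * Q m) /\
  (\sum_(m < N | 0 < p m) s m ^+ 2 / p m = \sum_m 4 * Q m <->
     forall m, s m ^+ 2 = 4 * p m * Q m /\ (p m = 0 -> Q m = 0)).
Proof.
move=> p0 Q0 hs.
pose g m := if 0 < p m then 4 * Q m - s m ^+ 2 / p m else 4 * Q m.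
have g0 m : 0 <= g m.
  rewrite /g; case: ifP => pp; last by rewrite mulr_ge0.
  by rewrite subr_ge0 ler_pdivrMr //; move: (hs m); lra.
have E : \sum_m 4 * Q m - \sum_(m < N | 0 < p m) s m ^+ 2 / p m = \sum_m g m.
  rewrite (bigID (fun m => 0 < p m)) /= [in RHS](bigID (fun m => 0 < p m)) /=.
  rewrite /g; under [in RHS]eq_bigr => m hm do rewrite hm.
  under [X in _ = _ + X]eq_bigr => m hm do rewrite (negPf hm).
  by rewrite sumrB addrAC.
split; first by rewrite -subr_ge0 E sumr_ge0.
split=> [hF m | H].
- have gsum0 : \sum_m g m = 0 by rewrite -E hF subrr.
  move/psumr_eq0P: gsum0 => /(_ (fun m _ => g0 m) m isT).
  rewrite /g; case: ifP => pp => [/eqP|hQ]; last first.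
    have {}hQ : Q m = 0 by lra.
    have := hs m; rewrite hQ !mulr0 => h.
    by split=> //; apply/eqP; rewrite eq_le h sqr_ge0.
  rewrite subr_eq0 => /eqP e; split; last by move=> pz; move: pp; rewrite pz ltxx.
  by move/(congr1 (fun x => x * p m)): e; rewrite divfK ?gt_eqF // => <-; ring.
- apply/eqP; rewrite eq_sym -subr_eq0 E; apply/eqP; apply: big1 => m _.
  rewrite /g; case: ifP => pp.
    by rewrite (proj1 (H m)) mulrAC mulfK ?gt_eqF // subrr.
  have pz : p m = 0 by apply/le_anti; rewrite p0 andbT leNgt pp.
  by rewrite (proj2 (H m) pz) mulr0.
Qed.

Section ComplexDerivative.
Variable R : realType.
Local Notation C := R[i].

Lemma cderiv_uniq (f : R -> C) x d1 d2 : cderiv f x d1 -> cderiv f x d2 -> d1 = d2.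
Proof.
move=> [r1 i1] [r2 i2]; apply: complex_ext.
  by rewrite -(@derive_val _ _ _ _ _ _ _ r1) -(@derive_val _ _ _ _ _ _ _ r2).
by rewrite -(@derive_val _ _ _ _ _ _ _ i1) -(@derive_val _ _ _ _ _ _ _ i2).
Qed.

Lemma cderiv_near (f g : R -> C) x d :
  (\near x, f x = g x) -> cderiv f x d -> cderiv g x d.
Proof.
move=> hn [h1 h2]; split.
  by apply: (near_eq_is_derive _ h1); near=> t; rewrite (near hn t).
by apply: (near_eq_is_derive _ h2); near=> t; rewrite (near hn t).
Unshelve. all: by end_near.
Qed.

Lemma cderiv_ext (f g : R -> C) x d : f =1 g -> cderiv f x d -> cderiv g x d.
Proof. by move=> /funext ->. Qed.

Lemma cderiv_cst (c : C) x : cderiv (fun _ => c) x 0.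
Proof. by split; apply: is_derive_cst. Qed.

Lemma cderivM (f g : R -> C) x df dg : cderiv f x df -> cderiv g x dg ->
  cderiv (fun t => f t * g t) x (df * g x + f x * dg).
Proof.
move=> [f1 f2] [g1 g2]; split.
  have -> : (fun t => complex.Re (f t * g t)) =
      (fun t => complex.Re (f t)) * (fun t => complex.Re (g t))
      - (fun t => complex.Im (f t)) * (fun t => complex.Im (g t)).
    by apply/funext => t; rewrite ReM.
  eapply is_derive_eq; first exact: (is_deriveB (is_deriveM f1 g1) (is_deriveM f2 g2)).
  by rewrite ReD !ReM /= /GRing.scale /=; ring.
have -> : (fun t => complex.Im (f t * g t)) =
    (fun t => complex.Re (f t)) * (fun t => complex.Im (g t))
    + (fun t => complex.Im (f t)) * (fun t => complex.Re (g t)).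
  by apply/funext => t; rewrite ImM.
eapply is_derive_eq; first exact: (is_deriveD (is_deriveM f1 g2) (is_deriveM f2 g1)).
by rewrite ImD !ImM /= /GRing.scale /=; ring.
Qed.

Lemma cderiv_conj (f : R -> C) x df :
  cderiv f x df -> cderiv (fun t => conjc (f t)) x (conjc df).
Proof.
move=> [f1 f2]; split.
  have -> : (fun t => complex.Re (conjc (f t))) = (fun t => complex.Re (f t)).
    by apply/funext => t; case: (f t).
  by case: df f1 f2 => ? ? f1 _.
have -> : (fun t => complex.Im (conjc (f t))) = - (fun t => complex.Im (f t)).
  by apply/funext => t; rewrite /= /GRing.opp /=; case: (f t).
by case: df f1 f2 => ? ? _ f2; apply: is_deriveN.
Qed.

Lemma cderiv_sum n (f : 'I_n -> R -> C) x df :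
  (forall i, cderiv (f i) x (df i)) ->
  cderiv (fun t => \sum_i f i t) x (\sum_i df i).
Proof.
move=> h; split.
  have -> : (fun t => complex.Re (\sum_i f i t)) = \sum_i (fun t => complex.Re (f i t)).
    by rewrite fct_sumE; apply/funext => t; rewrite Re_sum.
  by rewrite Re_sum; apply: is_derive_sum => i; case: (h i).
have -> : (fun t => complex.Im (\sum_i f i t)) = \sum_i (fun t => complex.Im (f i t)).
  by rewrite fct_sumE; apply/funext => t; rewrite Im_sum.
by rewrite Im_sum; apply: is_derive_sum => i; case: (h i).
Qed.

Lemma cderiv_real (r : R -> R) (x dr : R) :
  is_derive x (1 : R) r dr -> cderiv (fun t => (r t)%:C) x dr%:C.
Proof. by move=> h; split => //=; apply: is_derive_cst. Qed.

End ComplexDerivative.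

Section MatrixDerivative.
Variable R : realType.
Local Notation C := R[i].

Lemma mxderiv_uniq m n (f : R -> 'M[C]_(m, n)) x F1 F2 :
  mxderiv f x F1 -> mxderiv f x F2 -> F1 = F2.
Proof. by move=> h1 h2; apply/matrixP => i j; apply: cderiv_uniq (h1 i j) (h2 i j). Qed.

Lemma mxderiv_near m n (f g : R -> 'M[C]_(m, n)) x F :
  (\near x, f x = g x) -> mxderiv f x F -> mxderiv g x F.
Proof.
move=> hn h i j; apply: cderiv_near (h i j).
by near=> t; rewrite (near hn t).
Unshelve. all: by end_near.
Qed.

Lemma mxderiv_cst m n (A : 'M[C]_(m, n)) x : mxderiv (fun _ => A) x 0.
Proof. by move=> i j; rewrite mxE; apply: cderiv_cst. Qed.

Lemma mxderiv_sum k m n (f : 'I_k -> R -> 'M[C]_(m, n)) x F :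
  (forall l, mxderiv (f l) x (F l)) ->
  mxderiv (fun t => \sum_l f l t) x (\sum_l F l).
Proof.
move=> h i j; rewrite summxE; apply: cderiv_ext (cderiv_sum (fun l => h l i j)).
by move=> t; rewrite summxE.
Qed.

Lemma mxderiv_mul m n p (f : R -> 'M[C]_(m, n)) (g : R -> 'M[C]_(n, p)) x F G :
  mxderiv f x F -> mxderiv g x G ->
  mxderiv (fun t => f t *m g t) x (F *m g x + f x *m G).
Proof.
move=> hf hg i j; rewrite !mxE -big_split.
apply: cderiv_ext (cderiv_sum (fun l => cderivM (hf i l) (hg l j))).
by move=> t; rewrite mxE.
Qed.

Lemma mxderiv_mulmr m n p (f : R -> 'M[C]_(m, n)) (B : 'M[C]_(n, p)) x F :
  mxderiv f x F -> mxderiv (fun t => f t *m B) x (F *m B).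
Proof. by move=> hf; have := mxderiv_mul hf (mxderiv_cst B x); rewrite mulmx0 addr0. Qed.

Lemma mxderiv_adj m n (f : R -> 'M[C]_(m, n)) x F :
  mxderiv f x F -> mxderiv (fun t => adj (f t)) x (adj F).
Proof.
move=> hf i j; rewrite !mxE; apply: cderiv_ext (cderiv_conj (hf j i)).
by move=> t; rewrite !mxE.
Qed.

Lemma mxderiv_scale m n (c : R -> C) (f : R -> 'M[C]_(m, n)) x dc F :
  cderiv c x dc -> mxderiv f x F ->
  mxderiv (fun t => c t *: f t) x (dc *: f x + c x *: F).
Proof.
move=> hc hf i j; rewrite !mxE; apply: cderiv_ext (cderivM hc (hf i j)).
by move=> t; rewrite mxE.
Qed.

End MatrixDerivative.

Lemma cderiv_trace (R : realType) n (f : R -> 'M[R[i]]_n) x F :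
  mxderiv f x F -> cderiv (fun t => \tr (f t)) x (\tr F).
Proof. by move=> hf; apply: cderiv_sum => i; apply: hf. Qed.

Section FisherBound.
Variable R : realType.
Local Notation C := R[i].
Variables (D : nat) (psi0 : 'cV[C]_D) (Ups Ups' : 'I_D -> R -> 'M[C]_D) (th : R).
Hypothesis Ups_deriv : forall k, mxderiv (Ups k) th (Ups' k th).

Local Notation rho0 := (psi0 *m adj psi0).
Local Notation a t := (fun k => Ups k t *m psi0).
Local Notation b := (fun k => Ups' k th *m psi0).

Lemma outstateE t : outstate Ups rho0 t = \sum_k a t k *m adj (a t k).
Proof. by apply: eq_bigr => k _; rewrite adjM !mulmxA. Qed.

Lemma outprobE N (M : 'I_N -> 'M[C]_D) m t :
  outprob (outstate Ups rho0) M m t = complex.Re (formsum (M m) (a t) (a t)).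
Proof.
rewrite /outprob /formsum outstateE mulmx_suml (raddf_sum (@mxtrace _ _)); congr complex.Re.
by apply: eq_bigr => k _; rewrite /= mxtrace_outer.
Qed.

Lemma outprob_derive1 N (M : 'I_N -> 'M[C]_D) m :
  derive1 (outprob (outstate Ups rho0) M m) th
  = complex.Re (formsum (M m) (a th) b + formsum (M m) b (a th)).
Proof.
have ha k : mxderiv (fun t => a t k) th (b k) by apply: mxderiv_mulmr.
have hrho : mxderiv (fun t => outstate Ups rho0 t *m M m) th
    ((\sum_k (b k *m adj (a th k) + a th k *m adj (b k))) *m M m).
  apply: mxderiv_mulmr.
  have := mxderiv_sum (fun k => mxderiv_mul (ha k) (mxderiv_adj (ha k))).
  by apply: mxderiv_near; near=> t; rewrite outstateE.
have [hRe _] := cderiv_trace hrho.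
have hd : is_derive th 1 (outprob (outstate Ups rho0) M m) _ := hRe.
rewrite derive1E (@derive_val _ _ _ _ _ _ _ hd) mulmx_suml (raddf_sum (@mxtrace _ _)).
rewrite /formsum -big_split /=.
by congr complex.Re; apply: eq_bigr => k _; rewrite mulmxDl mxtraceD !mxtrace_outer addrC.
Unshelve. all: by end_near.
Qed.

Lemma CUps_povmE N (M : 'I_N -> 'M[C]_D) : POVM M ->
  CUps Ups' rho0 th = \sum_m 4 * complex.Re (formsum (M m) b b).
Proof.
move=> [_ Msum]; rewrite /CUps -mulr_sumr -Re_sum; congr (4 * complex.Re _).
rewrite /formsum [in RHS]exchange_big /=; apply: eq_bigr => k _.
by rewrite -form_sumM Msum -mxtrace_outer mulmx1 adjM !mulmxA.
Qed.

Lemma fisher_le_CUps N (M : 'I_N -> 'M[C]_D) : POVM M ->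
  fisher (outstate Ups rho0) M th <= CUps Ups' rho0 th /\
  (fisher (outstate Ups rho0) M th = CUps Ups' rho0 th <->
     forall m, cs_equality (M m) (a th) b).
Proof.
move=> hM; rewrite (CUps_povmE hM); have [Mpsd _] := hM.
pose P m := complex.Re (formsum (M m) (a th) (a th)).
pose S m := complex.Re (formsum (M m) (a th) b + formsum (M m) b (a th)).
have -> : fisher (outstate Ups rho0) M th = \sum_(m < N | 0 < P m) S m ^+ 2 / P m.
  by apply: eq_big => [m|m _]; rewrite ?outprob_derive1 outprobE.
exact: (sum_sq_div_le (fun m => formsum_ge0 (Mpsd m) _) (fun m => formsum_ge0 (Mpsd m) _)
  (fun m => formsum_cauchy_schwarz (Mpsd m) _ _)).
Qed.

End FisherBound.

Section HermitianMeasurement.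
Variable R : realType.
Local Notation C := R[i].

(* Measuring in an orthonormal eigenbasis of a Hermitian L: every POVM element
   is a rank-one projector on which L acts as a real scalar. *)
Lemma hermitian_eigen_povm n (L : 'M[C]_n) : adj L = L ->
  exists (M : 'I_n -> 'M[C]_n) (d : 'I_n -> R), POVM M /\
    (forall m x y, form (M m) x (L *m y) = (d m)%:C * form (M m) x y) /\
    (forall m x y, form (M m) (L *m x) y = (d m)%:C * form (M m) x y).
Proof.
move=> Lsa; have Lherm : L \is hermsymmx.
  by apply/is_hermitianmxP; rewrite expr0 scale1r -adj_conjT Lsa.
set P := spectralmx L; set sp := spectral_diag L.
have hL : L = invmx P *m diag_mx sp *m P.
  by apply/orthomx_spectralP; apply: hermitian_normalmx.
pose d m := complex.Re (sp 0 m).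
have hd m : sp 0 m = (d m)%:C.
  rewrite /d RRe_real //; move/mxOverP: (hermitian_spectral_diag_real Lherm); apply.
have hN m : row m P *m L = (d m)%:C *: row m P.
  by rewrite -row_mul hL !mulmxA mulmxV ?spectral_unit // mul1mx row_mul
    row_diag_mx -scalemxAl -rowE hd.
exists (fun m => adj (row m P) *m row m P), d; split; last split.
- split=> [m v|]; first by rewrite /psd -/(form _ v v) form_rank1 mulrC mulcJ_ge0.
  have -> : \sum_m adj (row m P) *m row m P = adj P *m P.
    apply/matrixP => i j; rewrite summxE !mxE; apply: eq_bigr => m _.
    by rewrite !mxE big_ord1 !mxE.
  by rewrite adj_conjT -invmx_unitary ?mulVmx ?spectral_unit ?spectral_unitarymx.
- move=> m x y; rewrite !form_rank1 mulmxA hN -scalemxAl; set u := conjc _.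
  by rewrite mxE mulrCA.
- move=> m x y; rewrite !form_rank1 mulmxA hN -scalemxAl; set u := (_ *m y) 0 0.
  by rewrite mxE conjcM conjc_real mulrA.
Qed.

Lemma eigen_povm_cs_equality n N D (M : 'I_N -> 'M[C]_n) (d : 'I_N -> R)
    (L : 'M[C]_n) (a b : 'I_D -> 'cV[C]_n) :
  (forall k, b k = L *m a k) ->
  (forall m x y, form (M m) x (L *m y) = (d m)%:C * form (M m) x y) ->
  (forall m x y, form (M m) (L *m x) y = (d m)%:C * form (M m) x y) ->
  forall m, cs_equality (M m) a b.
Proof.
move=> hb hLr hLl m.
have eab : formsum (M m) a b = (d m)%:C * formsum (M m) a a.
  by rewrite /formsum mulr_sumr; apply: eq_bigr => k _; rewrite hb hLr.
have eba : formsum (M m) b a = (d m)%:C * formsum (M m) a a.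
  by rewrite /formsum mulr_sumr; apply: eq_bigr => k _; rewrite hb hLl.
have ebb : formsum (M m) b b = (d m)%:C * (d m)%:C * formsum (M m) a a.
  by rewrite /formsum mulr_sumr; apply: eq_bigr => k _; rewrite hb hLl hLr mulrA.
rewrite /cs_equality eab eba ebb; case: (formsum (M m) a a) => ? ? /=.
by split=> [|->]; ring.
Qed.

(* The Hermitian L = Σ_k (c_k/s_k) |w_k><w_k| + |w_k'><w_k| + |w_k><w_k'| over
   the support, which maps a_k = s_k w_k to b_k = c_k w_k + s_k w_k'. *)
Lemma hermitian_lift D (a b w w' : 'I_D -> 'cV[C]_D) (s c : 'I_D -> R)
    (S : pred 'I_D) :
  (forall k, a k = (s k)%:C *: w k) ->
  (forall k, S k -> 0 < s k) ->
  (forall k, ~~ S k -> s k = 0 /\ b k = 0) ->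
  (forall k, S k -> b k = (c k)%:C *: w k + (s k)%:C *: w' k) ->
  (forall j k, form 1%:M (w j) (w k) = if j == k then 1 else 0) ->
  (forall j k, S j -> S k -> form 1%:M (w' j) (w k) = 0) ->
  exists L, adj L = L /\ forall j, b j = L *m a j.
Proof.
move=> ha hs hns hb hw hc.
pose L := \sum_(k | S k) ((c k / s k)%:C *: (w k *m adj (w k))
                          + w' k *m adj (w k) + w k *m adj (w' k)).
exists L; split.
  rewrite /L adj_sum; apply: eq_bigr => k _.
  by rewrite !adjD !adjZ !adjM !adjK conjc_real addrAC.
move=> j; case: (boolP (S j)) => hSj; last first.
  by have [s0 b0] := hns j hSj; rewrite ha s0 b0 scale0r mulmx0.
rewrite /L mulmx_suml (bigD1 j) //= big1 ?addr0 => [|k /andP[hSk hkj]].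
  rewrite hb // !mulmxDl -!scalemxAl !outer_mulmx ha !formZr hw eqxx hc //.
  by rewrite !mulr0 scale0r addr0 !mulr1 scalerA -rmorphM /= divfK ?gt_eqF ?hs.
rewrite !mulmxDl -!scalemxAl !outer_mulmx ha !formZr hw hc //.
by rewrite (negPf hkj) !mulr0 !scale0r scaler0 !addr0.
Qed.

End HermitianMeasurement.

Section CanonicalKraus.
Variable R : realType.
Local Notation C := R[i].
Variables (Theta : set R) (D : nat) (psi0 : 'cV[C]_D)
  (Ups Ups' : 'I_D -> R -> 'M[C]_D) (p : 'I_D -> R -> R) (w w' : 'I_D -> R -> 'cV[C]_D).
Hypothesis Theta_open : open Theta.
Hypothesis Ups_deriv : forall k th, Theta th -> mxderiv (Ups k) th (Ups' k th).
Hypothesis w_deriv : forall k th, Theta th -> mxderiv (w k) th (w' k th).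
Hypothesis Ups_canonical : forall j k th, Theta th ->
  \tr (Ups k th *m (psi0 *m adj psi0) *m adj (Ups j th)) = (if j == k then (p k th)%:C else 0).
Hypothesis Ups_psi0 : forall k th, Theta th ->
  Ups k th *m psi0 = (Num.sqrt (p k th))%:C *: w k th.
Hypothesis w_orthonormal : forall j k th, Theta th ->
  (adj (w j th) *m w k th) 0 0 = (if j == k then 1 else 0).
Hypothesis p_dichotomy : forall k,
  (forall th, Theta th -> p k th = 0) \/ (forall th, Theta th -> 0 < p k th).
Variable th : R.
Hypothesis Theta_th : Theta th.

Local Notation rho0 := (psi0 *m adj psi0).
Local Notation a := (fun k => Ups k th *m psi0).
Local Notation b := (fun k => Ups' k th *m psi0).

Let near_Theta : \forall t \near th, Theta t.
Proof. by apply: open_nbhs_nbhs; split. Qed.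

Let Ups_deriv_th k : mxderiv (Ups k) th (Ups' k th).
Proof. exact: Ups_deriv. Qed.

Let a_deriv k : mxderiv (fun t => Ups k t *m psi0) th (b k).
Proof. exact: mxderiv_mulmr. Qed.

Lemma kraus_unsupported k : ~~ (0 < p k th) -> p k th = 0 /\ b k = 0.
Proof.
move=> hk; have p0 : forall t, Theta t -> p k t = 0.
  by case: (p_dichotomy k) => // hpos; move: hk; rewrite hpos.
split; first exact: p0.
apply: (mxderiv_uniq (a_deriv k)); apply: mxderiv_near (mxderiv_cst 0 th).
near=> t; have Tt : Theta t by near: t; exact: near_Theta.
by rewrite Ups_psi0 // p0 // sqrtr0 scale0r.
Unshelve. all: by end_near.
Qed.

(* Differentiate Υ_k ψ0 = √p_k w_k; p_k = tr(Υ_k ρ0 Υ_k^†) is differentiable. *)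
Lemma kraus_supported k : 0 < p k th ->
  exists c : R, b k = c%:C *: w k th + (Num.sqrt (p k th))%:C *: w' k th.
Proof.
move=> hp.
have hg := mxderiv_mul (mxderiv_mulmr rho0 (Ups_deriv_th k)) (mxderiv_adj (Ups_deriv_th k)).
have [+ _] := cderiv_trace hg; set dp := complex.Re _ => hg1.
have hpd : is_derive th (1 : R) (p k) dp.
  apply: (near_eq_is_derive _ hg1); near=> t.
  by rewrite Ups_canonical ?eqxx //; near: t; exact: near_Theta.
have hsqrt := mxderiv_scale (cderiv_real (is_derive1_comp (is_derive1_sqrt hp) hpd))
  (w_deriv k Theta_th).
eexists; apply: (mxderiv_uniq (a_deriv k)); apply: mxderiv_near hsqrt.
by near=> t; rewrite Ups_psi0 //; near: t; exact: near_Theta.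
Unshelve. all: by end_near.
Qed.

Lemma basis_deriv_skew j k :
  form 1%:M (w' j th) (w k th) + form 1%:M (w j th) (w' k th) = 0.
Proof.
have h1 := mxderiv_mul (mxderiv_adj (w_deriv j Theta_th)) (w_deriv k Theta_th) 0 0.
have h2 : cderiv (fun t => (adj (w j t) *m w k t) 0 0) th 0.
  apply: cderiv_near (cderiv_cst (if j == k then 1 else 0) th).
  by near=> t; rewrite w_orthonormal //; near: t; exact: near_Theta.
by have := cderiv_uniq h1 h2; rewrite !form1 mxE.
Unshelve. all: by end_near.
Qed.

Let w_orthonormal1 j k : form 1%:M (w j th) (w k th) = if j == k then 1 else 0.
Proof. by rewrite form1 w_orthonormal. Qed.

(* The c_k w_k terms cancel because c_k is real. *)
Lemma supported_form_antisym j k : 0 < p j th -> 0 < p k th ->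
  form 1%:M (a j) (b k) - form 1%:M (b j) (a k)
  = (Num.sqrt (p j th) * Num.sqrt (p k th))%:C *
    (form 1%:M (w j th) (w' k th) - form 1%:M (w' j th) (w k th)).
Proof.
move=> hj hk; have [<-|njk] := eqVneq j k.
  have [c ->] := kraus_supported hj.
  rewrite !Ups_psi0 // !(formDl, formDr, formZl, formZr) !conjc_real w_orthonormal1.
  by rewrite eqxx real_complexM; ring.
have [cj ->] := kraus_supported hj; have [ck ->] := kraus_supported hk.
rewrite !Ups_psi0 // !(formDl, formDr, formZl, formZr) !conjc_real !w_orthonormal1.
by rewrite (negPf njk) real_complexM; ring.
Qed.

Lemma optimal_povm_ortho N (M : 'I_N -> 'M[C]_D) : POVM M ->
  fisher (outstate Ups rho0) M th = CUps Ups' rho0 th ->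
  forall j k, 0 < p j th -> 0 < p k th -> form 1%:M (w' j th) (w k th) = 0.
Proof.
move=> hM /(proj2 (fisher_le_CUps psi0 Ups_deriv_th hM)) hcs j k hj hk.
have := supported_form_antisym hj hk.
rewrite (povm_cs_equality_sym hM hcs) subrr => /esym /eqP.
have sj : Num.sqrt (p j th) != 0 by rewrite gt_eqF ?sqrtr_gt0.
have sk : Num.sqrt (p k th) != 0 by rewrite gt_eqF ?sqrtr_gt0.
rewrite mulf_eq0 fmorph_eq0 mulf_eq0 (negPf sj) (negPf sk) /= subr_eq0 => /eqP hsym.
have := basis_deriv_skew j k; rewrite -hsym -mulr2n -mulr_natr => /eqP.
by rewrite mulf_eq0 pnatr_eq0 orbF => /eqP.
Qed.

Lemma ortho_optimal_povm :
  (forall j k, 0 < p j th -> 0 < p k th -> form 1%:M (w' j th) (w k th) = 0) ->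
  exists N (M : 'I_N -> 'M[C]_D), POVM M /\
    fisher (outstate Ups rho0) M th = CUps Ups' rho0 th.
Proof.
move=> hortho.
have hc0 k : exists c : R, 0 < p k th ->
    b k = c%:C *: w k th + (Num.sqrt (p k th))%:C *: w' k th.
  have [/kraus_supported [c ->]|_] := ltrP 0 (p k th); first by exists c.
  by exists 0.
have [c hc] := boolp.choice hc0.
have hs k : 0 < p k th -> 0 < Num.sqrt (p k th) by rewrite sqrtr_gt0.
have hns k : ~~ (0 < p k th) -> Num.sqrt (p k th) = 0 /\ b k = 0.
  by move=> /kraus_unsupported [-> ->]; rewrite sqrtr0.
have [L [Lsa hL]] := hermitian_lift (fun k => Ups_psi0 k Theta_th) hs hns hc
  w_orthonormal1 hortho.
have [M [d [hM [hLr hLl]]]] := hermitian_eigen_povm Lsa.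
exists D, M; split=> //; apply/(proj2 (fisher_le_CUps psi0 Ups_deriv_th hM)).
exact: eigen_povm_cs_equality hL hLr hLl.
Qed.

End CanonicalKraus.

Theorem theorem2p6 (R : realType) (Theta : set R)
  (D : nat) (psi0 : 'cV[R[i]]_D)
  (Ups Ups' : 'I_D -> R -> 'M[R[i]]_D)
  (p : 'I_D -> R -> R)
  (w w' : 'I_D -> R -> 'cV[R[i]]_D) :
  open Theta -> is_interval Theta -> Theta !=set0 ->
  (0 < D)%N ->
  (adj psi0 *m psi0) 0 0 = 1 ->
  (forall k th, Theta th -> mxderiv (Ups k) th (Ups' k th)) ->
  (forall k th, Theta th -> mxderiv (w k) th (w' k th)) ->
  (forall th, Theta th -> \sum_(k < D) adj (Ups k th) *m Ups k th = 1%:M) ->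
  (forall j k th, Theta th ->
     \tr (Ups k th *m (psi0 *m adj psi0) *m adj (Ups j th))
       = (if j == k then (p k th)%:C else 0)) ->
  (forall k th, Theta th -> Ups k th *m psi0 = (Num.sqrt (p k th))%:C *: w k th) ->
  (forall j k th, Theta th ->
     (adj (w j th) *m w k th) 0 0 = (if j == k then 1 else 0)) ->
  (forall k, (forall th, Theta th -> p k th = 0) \/ (forall th, Theta th -> 0 < p k th)) ->
  forall th, Theta th ->
    (forall (N : nat) (M : 'I_N -> 'M[R[i]]_D), POVM M ->
        fisher (outstate Ups (psi0 *m adj psi0)) M th
          <= CUps Ups' (psi0 *m adj psi0) th)
    /\
    ((exists (N : nat) (M : 'I_N -> 'M[R[i]]_D), POVM M /\
        fisher (outstate Ups (psi0 *m adj psi0)) M th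
          = CUps Ups' (psi0 *m adj psi0) th)
     <->
     (forall j k, 0 < p j th -> 0 < p k th ->
        (adj (w' j th) *m w k th) 0 0 = 0)).
Proof.
move=> Topen _ _ _ _ hU hw _ hcanon hUw hortho hdich th Tth.
split=> [N M hM|].
  exact: (proj1 (fisher_le_CUps psi0 (fun k => hU k th Tth) hM)).
split=> [[N [M [hM hF]]] j k hj hk|hcond].
  by rewrite -form1; exact: (optimal_povm_ortho Topen hU hw hcanon hUw hortho Tth hM hF).
apply: (ortho_optimal_povm Topen hU hw hcanon hUw hortho hdich Tth) => j k hj hk.
by rewrite form1; exact: hcond.
Qed.
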